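(* Let $k^{*}\ge2$, let $\boldsymbol\beta^\star_1,\ldots,\boldsymbol\beta^\star_{k^{*}}\in\mathbb{R}^d$ be distinct, $r>0$, $\Delta_{\max}:=\max_{i,j}\|\boldsymbol\beta^\star_i-\boldsymbol\beta^\star_j\|$, $\Delta_{\min}:=\min_{i\ne j}\|\boldsymbol\beta^\star_i-\boldsymbol\beta^\star_j\|$, and assume $\Delta_{\min}/r\ge30$. Let $\mathbf{x}_1,\ldots,\mathbf{x}_n$ be generated independently from the stochastic ball mixture model with these centers and radius $r$. If $\boldsymbol\beta\in(\mathbb{R}^d)^{k^{*}}$ is a non-degenerate local minimum of $G_n$, then $G_n(\boldsymbol\beta)\le 4\Delta_{\max}^2$.
   Context: The stochastic ball mixture model has density $f^*=\frac{1}{k^{*}}\sum_{s=1}^{k^{*}}f^*_s$, with $f^*_s$ the uniform density on the Euclidean ball of radius $r$ centered at $\boldsymbol\beta^\star_s$. The empirical $k$-means objective is $G_n(\boldsymbol\beta)=\frac1n\sum_{t=1}^n\min_{j\in[k^{*}]}\|\mathbf{x}_t-\boldsymbol\beta_j\|^2$ for $\boldsymbol\beta=(\boldsymbol\beta_1,\ldots,\boldsymbol\beta_{k^{*}})$. A solution $\boldsymbol\beta$ is non-degenerate if every fitted cluster (the set of data points closest to $\boldsymbol\beta_i$) is nonempty. *)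

From mathcomp Require Import all_boot all_order all_algebra.
From mathcomp Require Import reals.
Set Implicit Arguments. Unset Strict Implicit. Unset Printing Implicit Defensive.
Import Order.TTheory GRing.Theory Num.Theory.
Local Open Scope ring_scope.

Section Defs.
Variable R : realType.

Definition sqnorm (d : nat) (v : 'rV[R]_d) : R := \sum_(i < d) (v ord0 i) ^+ 2.
Definition enorm (d : nat) (v : 'rV[R]_d) : R := Num.sqrt (sqnorm v).

(* minimum over j : 'I_k of F j (meaningful for k > 0) *)
Definition kmin (k : nat) (F : 'I_k -> R) : R :=
  \big[Num.min/ head 0 [seq F j | j <- enum 'I_k]]_(j < k) F j.

Definition Gn (n k d : nat) (x : 'I_n -> 'rV[R]_d) (b : 'I_k -> 'rV[R]_d) : R :=
  n%:R^-1 * \sum_(t < n) kmin (fun j => sqnorm (x t - b j)).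

Definition is_local_min (n k d : nat) (x : 'I_n -> 'rV[R]_d) (b : 'I_k -> 'rV[R]_d) : Prop :=
  exists2 eps : R, 0 < eps &
    forall b' : 'I_k -> 'rV[R]_d, (forall j, enorm (b' j - b j) < eps) -> Gn x b <= Gn x b'.

Definition fitted_cluster (n k d : nat) (x : 'I_n -> 'rV[R]_d) (b : 'I_k -> 'rV[R]_d) (i : 'I_k)
  : 'I_n -> Prop :=
  fun t => forall j, enorm (x t - b i) <= enorm (x t - b j).

Definition non_degenerate (n k d : nat) (x : 'I_n -> 'rV[R]_d) (b : 'I_k -> 'rV[R]_d) : Prop :=
  forall i, exists t, fitted_cluster x b i t.

Definition Delta_max (k d : nat) (c : 'I_k -> 'rV[R]_d) : R :=
  \big[Num.max/0]_(i < k) \big[Num.max/0]_(j < k) enorm (c i - c j).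

End Defs.

(** At a local minimum [b] of the k-means objective every center [b_i] is the
    centroid of its fitted cluster (of size [m > 0] by non-degeneracy): moving
    [b_i] by [e W], where [W] is the sum of the residuals [x_t - b_i] over the
    cluster, changes the objective by at most [(m e^2 - 2 e) |W|^2], which is
    negative for small [e > 0] unless [W = 0].  Hence the squared distance from
    any data point to [b_i] is at most the average of its squared distances to
    the points of that cluster.  All samples lie in balls of radius [r] around
    centers at mutual distance at most [Delta_max >= 30 r], so these pairwise
    squared distances are at most [3 (2 r^2 + Delta_max^2) <= 4 Delta_max^2]. *)
From mathcomp Require Import all_boot all_order all_algebra.
From mathcomp Require Import reals.
From mathcomp Require Import ring lra.
Import Order.TTheory GRing.Theory Num.Theory.
Set Implicit Arguments. Unset Strict Implicit.
Local Open Scope ring_scope.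

Section KMeans.
Variable R : realType.

Lemma kmin_le (k : nat) (F : 'I_k -> R) j : kmin F <= F j.
Proof. by rewrite /kmin (bigD1 j) //= ge_min lexx. Qed.

Lemma kmin_attained (k : nat) (F : 'I_k -> R) : (0 < k)%N -> exists j, kmin F = F j.
Proof.
move=> k_gt0; apply: (big_ind (fun y => exists j, y = F j)).
- case E: (enum 'I_k) => [|j s] /=; last by exists j.
  by have := mem_enum 'I_k (Ordinal k_gt0); rewrite E.
- by move=> _ _ [i ->] [j ->]; case: (leP (F i) (F j)); [exists i | exists j].
- by move=> j _; exists j.
Qed.

Lemma kmin_eq_least (k : nat) (F : 'I_k -> R) i :
  (forall j, F i <= F j) -> kmin F = F i.
Proof.
move=> Fi_least; have [j Fj] := kmin_attained F (leq_ltn_trans (leq0n i) (ltn_ord i)).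
by apply/le_anti; rewrite kmin_le Fj Fi_least.
Qed.

Lemma kmin_update_le (k : nat) (F G : 'I_k -> R) i :
  (forall j, j != i -> G j = F j) ->
  kmin G <= (if kmin F == F i then G i else kmin F).
Proof.
move=> GF; case: eqP => [_|Fi_not_min]; first exact: kmin_le.
have [j Fj] := kmin_attained F (leq_ltn_trans (leq0n i) (ltn_ord i)).
have ji : j != i by apply: contra_not_neq Fi_not_min => <-.
by rewrite Fj -(GF j ji) kmin_le.
Qed.

Definition dot (d : nat) (u v : 'rV[R]_d) : R := \sum_(c < d) u ord0 c * v ord0 c.

Lemma dotZl (d : nat) (a : R) (u v : 'rV[R]_d) : dot (a *: u) v = a * dot u v.
Proof. by rewrite /dot mulr_sumr; apply: eq_bigr => c _; rewrite mxE mulrA. Qed.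

Lemma dotvv (d : nat) (v : 'rV[R]_d) : dot v v = sqnorm v.
Proof. by apply: eq_bigr => c _; rewrite expr2. Qed.

Lemma sqnorm_ge0 (d : nat) (v : 'rV[R]_d) : 0 <= sqnorm v.
Proof. by apply: sumr_ge0 => c _; rewrite sqr_ge0. Qed.

Lemma sqnorm_eq0 (d : nat) (v : 'rV[R]_d) : sqnorm v = 0 -> v = 0.
Proof.
move=> /(psumr_eq0P (fun c _ => sqr_ge0 (v ord0 c))) v0.
apply/rowP => c; rewrite mxE; apply/eqP; rewrite -sqrf_eq0; exact/eqP/v0.
Qed.

Lemma sqnormZ (d : nat) (a : R) (v : 'rV[R]_d) : sqnorm (a *: v) = a ^+ 2 * sqnorm v.
Proof. by rewrite /sqnorm mulr_sumr; apply: eq_bigr => c _; rewrite mxE exprMn. Qed.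

Lemma enorm0 (d : nat) : enorm (0 : 'rV[R]_d) = 0.
Proof. by rewrite /enorm /sqnorm big1 ?sqrtr0 // => c _; rewrite mxE expr0n. Qed.

Lemma enormZ (d : nat) (a : R) (v : 'rV[R]_d) : enorm (a *: v) = `|a| * enorm v.
Proof. by rewrite /enorm sqnormZ sqrtrM ?sqr_ge0 // sqrtr_sqr. Qed.

Lemma sqnorm_le (d : nat) (v : 'rV[R]_d) (r : R) : enorm v <= r -> sqnorm v <= r ^+ 2.
Proof.
rewrite /enorm => le_r; have := sqrtr_ge0 (sqnorm v).
rewrite -[X in _ -> X <= _](sqr_sqrtr (sqnorm_ge0 v)); nra.
Qed.

Lemma sum_sqnorm_sub (n d : nat) (C : pred 'I_n) (v : 'I_n -> 'rV[R]_d) (a : 'rV[R]_d) :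
  \sum_(u in C) sqnorm (v u - a) =
  #|C|%:R * sqnorm a - 2 * dot a (\sum_(u in C) v u) + \sum_(u in C) sqnorm (v u).
Proof.
rewrite /sqnorm /dot [LHS]exchange_big [X in _ + X]exchange_big /=.
rewrite !mulr_sumr -sumrB -big_split /=; apply: eq_bigr => c _.
rewrite summxE !mulr_sumr mulr_natl -sumr_const -sumrB -big_split /=.
by apply: eq_bigr => u _; rewrite !mxE; ring.
Qed.

Lemma sqnorm_sub_le3 (d : nat) (p q c c' : 'rV[R]_d) :
  sqnorm (p - q) <= 3 * (sqnorm (p - c) + sqnorm (c - c') + sqnorm (q - c')).
Proof.
rewrite /sqnorm -!big_split mulr_sumr; apply: ler_sum => i _; rewrite !mxE.
set P := p ord0 i; set Q := q ord0 i; set X := c ord0 i; set Y := c' ord0 i.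
rewrite -subr_ge0.
have -> : 3 * ((P - X) ^+ 2 + (X - Y) ^+ 2 + (Q - Y) ^+ 2) - (P - Q) ^+ 2 =
  ((P - X) - (X - Y)) ^+ 2 + ((X - Y) - (Y - Q)) ^+ 2 + ((P - X) - (Y - Q)) ^+ 2 by ring.
by rewrite !addr_ge0 ?sqr_ge0.
Qed.

Lemma sqnorm_sub_centroid_le (n d : nat) (C : pred 'I_n) (y : 'I_n -> 'rV[R]_d) c z M :
  (0 < #|C|)%N -> \sum_(u in C) (y u - c) = 0 ->
  (forall u, u \in C -> sqnorm (y u - z) <= M) -> sqnorm (z - c) <= M.
Proof.
move=> C_gt0 centroid le_M; have m_gt0 : 0 < #|C|%:R :> R by rewrite ltr0n.
rewrite -(ler_pM2l m_gt0); apply: (@le_trans _ _ (\sum_(u in C) sqnorm (y u - z))).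
  have := sum_sqnorm_sub C (fun u => y u - c) (z - c).
  have -> : dot (z - c) (\sum_(u in C) (y u - c)) = 0.
    by rewrite centroid /dot big1 // => i _; rewrite !mxE mulr0.
  under eq_bigr do rewrite opprB addrA subrK.
  by rewrite mulr0 subr0 => ->; rewrite lerDl sumr_ge0 // => u _; apply: sqnorm_ge0.
by rewrite mulr_natl -sumr_const; apply: ler_sum.
Qed.

Lemma enorm_le_Delta_max (k d : nat) (c : 'I_k -> 'rV[R]_d) i j :
  enorm (c i - c j) <= Delta_max c.
Proof. by rewrite /Delta_max (bigD1 i) //= le_max (bigD1 j) //= le_max lexx. Qed.

Section Clusters.
Variables (n k d : nat) (x : 'I_n -> 'rV[R]_d) (b : 'I_k -> 'rV[R]_d).

Lemma Gn_le (M : R) : 0 <= M ->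
  (forall t, kmin (fun j => sqnorm (x t - b j)) <= M) -> Gn x b <= M.
Proof.
move=> M_ge0 kmin_le_M; rewrite /Gn; have [n0|n_gt0] := posnP n.
  by rewrite [in n%:R]n0 invr0 mul0r.
apply: (@le_trans _ _ (n%:R^-1 * (M *+ n))).
  by rewrite ler_pM2l ?invr_gt0 ?ltr0n // -[in M *+ n](card_ord n) -sumr_const ler_sum.
by rewrite -[M *+ n]mulr_natl mulKf // pnatr_eq0 -lt0n.
Qed.

(* As for [fitted_cluster], a point equidistant from several centers belongs
   to each of their clusters. *)
Definition cluster (i : 'I_k) : pred 'I_n :=
  [pred t | kmin (fun j => sqnorm (x t - b j)) == sqnorm (x t - b i)].

Lemma fitted_cluster_in i t : fitted_cluster x b i t -> t \in cluster i.
Proof.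
move=> closest; apply/eqP/kmin_eq_least => j.
by rewrite -ler_sqrt ?sqnorm_ge0 //; exact: closest.
Qed.

Lemma sum_kmin_move_center_le i v :
  \sum_t kmin (fun j => sqnorm (x t - (if j == i then b i + v else b j))) <=
  \sum_t kmin (fun j => sqnorm (x t - b j)) +
  \sum_(t in cluster i) (sqnorm (x t - (b i + v)) - sqnorm (x t - b i)).
Proof.
rewrite [\sum_(t in cluster i) _]big_mkcond -big_split /=; apply: ler_sum => t _.
apply: le_trans (kmin_update_le (F := fun j => sqnorm (x t - b j)) (i := i) _) _.
  by move=> j /negbTE ->.
by rewrite inE /= eqxx; case: eqP => [->|_]; rewrite ?addr0 // addrC subrK.
Qed.

Lemma local_min_cluster_shift_ge0 i : is_local_min x b ->
  exists2 eps, 0 < eps & forall v, enorm v < eps ->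
    0 <= \sum_(t in cluster i) (sqnorm (x t - (b i + v)) - sqnorm (x t - b i)).
Proof.
move=> [eps eps_gt0 b_min]; exists eps => // v v_small.
have [n0|n_gt0] := posnP n.
  by rewrite big1 // => t; have := ltn_ord t; rewrite {2}n0.
have : Gn x b <= Gn x (fun j => if j == i then b i + v else b j).
  apply: b_min => j; case: eqP => [->|_]; first by rewrite addrC addKr.
  by rewrite subrr enorm0.
rewrite /Gn ler_pM2l ?invr_gt0 ?ltr0n // => le_sum.
by have := le_trans le_sum (sum_kmin_move_center_le i v); rewrite lerDl.
Qed.

Lemma local_min_centroid i : is_local_min x b -> \sum_(t in cluster i) (x t - b i) = 0.
Proof.
move=> /(local_min_cluster_shift_ge0 i) [eps eps_gt0 shift_ge0].
set W := \sum_(t in cluster i) (x t - b i); set m : R := #|cluster i|%:R.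
have m1_gt0 : 0 < 1 + m by rewrite ltr_pwDl ?ler0n.
have W1_gt0 : 0 < 1 + enorm W by rewrite ltr_pwDl ?sqrtr_ge0.
pose e := Num.min (1 + m)^-1 (eps / (1 + enorm W)).
have e_gt0 : 0 < e by rewrite lt_min invr_gt0 m1_gt0 divr_gt0.
have em_lt1 : e * m < 1.
  have : e * (1 + m) <= 1 by rewrite -ler_pdivlMr // mul1r ge_min lexx.
  nra.
have eW_small : enorm (e *: W) < eps.
  have : e * (1 + enorm W) <= eps by rewrite -ler_pdivlMr // ge_min lexx orbT.
  rewrite enormZ gtr0_norm //; nra.
have := shift_ge0 _ eW_small; rewrite sumrB.
under eq_bigr do rewrite opprD addrA.
rewrite sum_sqnorm_sub addrK -/W -/m sqnormZ dotZl dotvv => shift_ge0'.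
have eS_ge0 : 0 <= e * sqnorm W by rewrite mulr_ge0 ?sqnorm_ge0 ?ltW.
have : e * sqnorm W <= 0 by nra.
rewrite pmulr_rle0 // => S_le0.
by apply: sqnorm_eq0; apply/le_anti; rewrite S_le0 sqnorm_ge0.
Qed.

End Clusters.

End KMeans.

Theorem mainTheorem3 (R : realType) (d k n : nat) (cstar : 'I_k -> 'rV[R]_d) (r : R)
  (x : 'I_n -> 'rV[R]_d) (b : 'I_k -> 'rV[R]_d) :
  (2 <= k)%N ->
  injective cstar ->
  0 < r ->
  (* Delta_min / r >= 30 *)
  (forall i j : 'I_k, i != j -> 30 <= enorm (cstar i - cstar j) / r) ->
  (* every sample lies in the support of the ball mixture *)
  (forall t, exists s, enorm (x t - cstar s) <= r) ->
  non_degenerate x b ->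
  is_local_min x b ->
  Gn x b <= 4 * Delta_max cstar ^+ 2.
Proof.
move=> k_ge2 _ r_gt0 separated in_support nondeg b_min.
set D := Delta_max cstar.
have D_ge : 30 * r <= D.
  have := separated (Ordinal (ltnW k_ge2)) (Ordinal k_ge2) isT.
  by rewrite ler_pdivlMr // => /le_trans; apply; apply: enorm_le_Delta_max.
have r2_le : 900 * r ^+ 2 <= D ^+ 2 by have := ltW r_gt0; nra.
have sample_dist t u : sqnorm (x u - x t) <= 4 * D ^+ 2.
  have [s /sqnorm_le ts] := in_support t; have [s' /sqnorm_le us] := in_support u.
  have := sqnorm_le (enorm_le_Delta_max cstar s' s).
  have := sqnorm_sub_le3 (x u) (x t) (cstar s') (cstar s).
  have := sqr_ge0 r; rewrite -/D; lra.
pose i0 : 'I_k := Ordinal (ltnW k_ge2).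
have [t0 /fitted_cluster_in t0_in] := nondeg i0.
have cluster_gt0 : (0 < #|cluster x b i0|)%N by apply/card_gt0P; exists t0.
apply: Gn_le => [|t]; first by rewrite mulr_ge0 ?sqr_ge0.
apply: le_trans (kmin_le _ i0) _.
apply: sqnorm_sub_centroid_le cluster_gt0 (local_min_centroid i0 b_min) _.
by move=> u _; apply: sample_dist.
Qed.
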